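(* Let $\mathcal{C}$ be a deflation-exact category and $\mathcal{A}$ an admissibly deflation-percolating subcategory. Let $X\rightarrowtail Y\twoheadrightarrow Z$ be a conflation and $f\colon Y\twoheadrightarrow B$ a deflation with $B\in\mathcal{A}$. Then there is a commutative diagram $$\begin{array}{ccccc} X''&\rightarrowtail&Y''&\twoheadrightarrow&Z''\\ \downarrow&&\downarrow&&\downarrow\\ X&\rightarrowtail&Y&\twoheadrightarrow&Z\\ \downarrow&&\downarrow{\scriptstyle f}&&\downarrow\\ A&\rightarrowtail&B&\twoheadrightarrow&C\end{array}$$ in which all rows and columns are conflations, the three upper vertical maps $X''\rightarrowtail X$, $Y''\rightarrowtail Y$, $Z''\rightarrowtail Z$ are $\mathcal{A}^{-1}$-inflations, and the bottom row lies in $\mathcal{A}$. Moreover, the upper left square is a pullback and the lower right square is a pushout.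
   Context: A conflation category is an additive category with a class of kernel-cokernel pairs (closed under isomorphisms) called conflations; first map an inflation, second a deflation. A deflation-exact category is a conflation category satisfying: (R0) $1_0$ is a deflation; (R1) composites of deflations are deflations; (R2) pullbacks of deflations along arbitrary morphisms exist and are deflations. A non-empty full subcategory $\mathcal{A}$ is admissibly deflation-percolating if: (A1) for every conflation $A'\rightarrowtail A\twoheadrightarrow A''$, $A\in\mathcal{A}$ iff $A',A''\in\mathcal{A}$; (A2) every morphism $C\to A$ with $A\in\mathcal{A}$ factors as a deflation $C\twoheadrightarrow A'$ followed by an inflation $A'\rightarrowtail A$ with $A'\in\mathcal{A}$; (A3) if $a\colon C\rightarrowtail D$ is an inflation and $b\colon C\twoheadrightarrow A$ a deflation with $A\in\mathcal{A}$, the pushout of $a$ along $b$ exists and yields a deflation $D\twoheadrightarrow P$ and an inflation $A\rightarrowtail P$. An $\mathcal{A}^{-1}$-inflation is an inflation whose cokernel lies in $\mathcal{A}$. *)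

From HB Require Import structures.
From mathcomp Require Import all_boot all_algebra.
Set Implicit Arguments. Unset Strict Implicit. Unset Printing Implicit Defensive.
Import GRing.Theory.
Local Open Scope ring_scope.

Record AddCat := {
  Obj : Type;
  Mor : Obj -> Obj -> zmodType;
  mcomp : forall X Y Z : Obj, Mor Y Z -> Mor X Y -> Mor X Z;
  idm : forall X : Obj, Mor X X;
  comp_assoc : forall (W X Y Z : Obj) (h : Mor Y Z) (g : Mor X Y) (f : Mor W X),
      mcomp h (mcomp g f) = mcomp (mcomp h g) f;
  comp_id_l : forall (X Y : Obj) (f : Mor X Y), mcomp (idm Y) f = f;
  comp_id_r : forall (X Y : Obj) (f : Mor X Y), mcomp f (idm X) = f;
  comp_addl : forall (X Y Z : Obj) (g1 g2 : Mor Y Z) (f : Mor X Y),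
      mcomp (g1 + g2) f = mcomp g1 f + mcomp g2 f;
  comp_addr : forall (X Y Z : Obj) (g : Mor Y Z) (f1 f2 : Mor X Y),
      mcomp g (f1 + f2) = mcomp g f1 + mcomp g f2;
  zero_obj : Obj;
  zero_obj_initial : forall (X : Obj) (f : Mor zero_obj X), f = 0;
  zero_obj_terminal : forall (X : Obj) (f : Mor X zero_obj), f = 0;
  biprod : Obj -> Obj -> Obj;
  bp_inl : forall X Y : Obj, Mor X (biprod X Y);
  bp_inr : forall X Y : Obj, Mor Y (biprod X Y);
  bp_pl : forall X Y : Obj, Mor (biprod X Y) X;
  bp_pr : forall X Y : Obj, Mor (biprod X Y) Y;
  bp_pl_inl : forall X Y : Obj, mcomp (bp_pl X Y) (bp_inl X Y) = idm X;
  bp_pr_inr : forall X Y : Obj, mcomp (bp_pr X Y) (bp_inr X Y) = idm Y;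
  bp_sum : forall X Y : Obj,
      mcomp (bp_inl X Y) (bp_pl X Y) + mcomp (bp_inr X Y) (bp_pr X Y) = idm (biprod X Y)
}.

Arguments Mor : clear implicits.
Arguments mcomp {a X Y Z}.
Arguments idm {a}.
Arguments zero_obj {a}.

Section Defs.
Variable C : AddCat.
Local Notation Ob := (Obj C).
Local Notation "g \o f" := (mcomp g f).

Definition is_iso (X Y : Ob) (f : Mor C X Y) : Prop :=
  exists g : Mor C Y X, g \o f = idm X /\ f \o g = idm Y.

Definition is_kernel (X Y Z : Ob) (i : Mor C X Y) (p : Mor C Y Z) : Prop :=
  p \o i = 0 /\
  forall (W : Ob) (g : Mor C W Y), p \o g = 0 -> exists! h : Mor C W X, i \o h = g.

Definition is_cokernel (X Y Z : Ob) (i : Mor C X Y) (p : Mor C Y Z) : Prop :=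
  p \o i = 0 /\
  forall (W : Ob) (g : Mor C Y W), g \o i = 0 -> exists! h : Mor C Z W, h \o p = g.

Definition kernel_cokernel_pair (X Y Z : Ob) (i : Mor C X Y) (p : Mor C Y Z) : Prop :=
  is_kernel i p /\ is_cokernel i p.

Definition is_pullback (A B T P : Ob) (f : Mor C A T) (g : Mor C B T)
    (p1 : Mor C P A) (p2 : Mor C P B) : Prop :=
  f \o p1 = g \o p2 /\
  forall (W : Ob) (u : Mor C W A) (v : Mor C W B), f \o u = g \o v ->
    exists! h : Mor C W P, p1 \o h = u /\ p2 \o h = v.

Definition is_pushout (S A B Q : Ob) (f : Mor C S A) (g : Mor C S B)
    (q1 : Mor C A Q) (q2 : Mor C B Q) : Prop :=
  q1 \o f = q2 \o g /\
  forall (W : Ob) (u : Mor C A W) (v : Mor C B W), u \o f = v \o g ->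
    exists! h : Mor C Q W, h \o q1 = u /\ h \o q2 = v.

End Defs.

Record ConflCat := {
  cc_cat :> AddCat;
  Confl : forall X Y Z : Obj cc_cat, Mor cc_cat X Y -> Mor cc_cat Y Z -> Prop;
  confl_kc : forall (X Y Z : Obj cc_cat) (i : Mor cc_cat X Y) (p : Mor cc_cat Y Z),
      Confl i p -> kernel_cokernel_pair i p;
  confl_iso : forall (X Y Z X' Y' Z' : Obj cc_cat)
      (i : Mor cc_cat X Y) (p : Mor cc_cat Y Z)
      (i' : Mor cc_cat X' Y') (p' : Mor cc_cat Y' Z')
      (a : Mor cc_cat X X') (b : Mor cc_cat Y Y') (c : Mor cc_cat Z Z'),
      is_iso a -> is_iso b -> is_iso c ->
      mcomp b i = mcomp i' a -> mcomp c p = mcomp p' b ->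
      Confl i p -> Confl i' p'
}.

Section Conf.
Variable C : ConflCat.
Local Notation Ob := (Obj C).
Local Notation "g \o f" := (mcomp g f).

Definition inflation (X Y : Ob) (i : Mor C X Y) : Prop :=
  exists (Z : Ob) (p : Mor C Y Z), Confl i p.

Definition deflation (Y Z : Ob) (p : Mor C Y Z) : Prop :=
  exists (X : Ob) (i : Mor C X Y), Confl i p.

(** Deflation-exact category: axioms R0, R1, R2. *)
Definition deflation_exact : Prop :=
  deflation (idm (@zero_obj C))
  /\ (forall (X Y Z : Ob) (p : Mor C X Y) (q : Mor C Y Z),
        deflation p -> deflation q -> deflation (q \o p))
  /\ (forall (Y Z Z' : Ob) (p : Mor C Y Z) (t : Mor C Z' Z),
        deflation p ->
        exists (P : Ob) (p' : Mor C P Z') (t' : Mor C P Y),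
          is_pullback p t t' p' /\ deflation p').

(** Admissibly deflation-percolating full subcategory (given by a predicate
    on objects): non-empty + A1, A2, A3. *)
Definition adm_defl_percolating (A : Ob -> Prop) : Prop :=
  (exists X : Ob, A X)
  /\ (forall (X Y Z : Ob) (i : Mor C X Y) (p : Mor C Y Z),
        Confl i p -> (A Y <-> (A X /\ A Z)))
  /\ (forall (X A0 : Ob) (g : Mor C X A0), A A0 ->
        exists (A' : Ob) (d : Mor C X A') (j : Mor C A' A0),
          A A' /\ deflation d /\ inflation j /\ g = j \o d)
  /\ (forall (X D A0 : Ob) (a : Mor C X D) (b : Mor C X A0),
        inflation a -> deflation b -> A A0 ->
        exists (P : Ob) (d : Mor C D P) (j : Mor C A0 P),
          is_pushout a b d j /\ deflation d /\ inflation j).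

Definition Ainv_inflation (A : Ob -> Prop) (X Y : Ob) (i : Mor C X Y) : Prop :=
  exists (Z : Ob) (p : Mor C Y Z), Confl i p /\ A Z.

End Conf.

From mathcomp Require Import all_boot all_algebra.
Set Implicit Arguments. Unset Strict Implicit. Unset Printing Implicit Defensive.
Import GRing.Theory.
Local Open Scope ring_scope.

(* Factor [f ∘ x] through [A] by (A2) as [a ∘ d1] and let [b] be a cokernel of
   [a]; the induced [d3 : Z -> C0] is a deflation since [d3 ∘ y = b ∘ f] is one
   and [C0] lies in [A].  Taking kernels of the three vertical deflations gives
   the top row, and the only real point is that the induced [y'' : Y'' -> Z''] is
   a deflation.  Pull the conflation [X >-> Y ->> Z] back along [Z'' >-> Z] to a
   conflation [X >-> P ->> Z'']; its pushout along [d1] is a deflation by (A3),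
   and it can be realised as [(m, p) : P -> A0 (+) Z''].  Then [y''] is the
   pullback of that deflation along the inclusion of [Z''], so it is a deflation
   by (R2). *)

Local Notation "g ∘ f" := (mcomp g f) (at level 40, left associativity).

Section AdditiveCategory.
Variable C : AddCat.

Definition monic (X Y : Obj C) (g : Mor C X Y) : Prop :=
  forall W (h1 h2 : Mor C W X), g ∘ h1 = g ∘ h2 -> h1 = h2.

Definition epic (X Y : Obj C) (g : Mor C X Y) : Prop :=
  forall W (h1 h2 : Mor C Y W), h1 ∘ g = h2 ∘ g -> h1 = h2.

Lemma comp0l (X Y Z : Obj C) (f : Mor C X Y) : (0 : Mor C Y Z) ∘ f = 0.
Proof.
have H := comp_addl (0 : Mor C Y Z) 0 f; rewrite addr0 in H.
by apply: (addrI (0 ∘ f)); rewrite -H addr0.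
Qed.

Lemma comp0r (X Y Z : Obj C) (g : Mor C Y Z) : g ∘ (0 : Mor C X Y) = 0.
Proof.
have H := comp_addr g (0 : Mor C X Y) 0; rewrite addr0 in H.
by apply: (addrI (g ∘ 0)); rewrite -H addr0.
Qed.

Lemma compNl (X Y Z : Obj C) (g : Mor C Y Z) (f : Mor C X Y) :
  (- g) ∘ f = - (g ∘ f).
Proof.
have H := comp_addl g (- g) f; rewrite subrr comp0l in H.
by apply: (addrI (g ∘ f)); rewrite -H subrr.
Qed.

Lemma compBl (X Y Z : Obj C) (g1 g2 : Mor C Y Z) (f : Mor C X Y) :
  (g1 - g2) ∘ f = g1 ∘ f - g2 ∘ f.
Proof. by rewrite comp_addl compNl. Qed.

Lemma iso_id (X : Obj C) : is_iso (idm X).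
Proof. by exists (idm X); rewrite comp_id_l. Qed.

Lemma kernel_monic (X Y Z : Obj C) (i : Mor C X Y) (p : Mor C Y Z) :
  is_kernel i p -> monic i.
Proof.
move=> [pi0 Ki] W h1 h2 E.
have [h [_ Uh]] : exists! h, i ∘ h = i ∘ h1.
  by apply: Ki; rewrite comp_assoc pi0 comp0l.
by rewrite -(Uh h1) // (Uh h2).
Qed.

Lemma cokernel_epic (X Y Z : Obj C) (i : Mor C X Y) (p : Mor C Y Z) :
  is_cokernel i p -> epic p.
Proof.
move=> [pi0 Kp] W h1 h2 E.
have [h [_ Uh]] : exists! h, h ∘ p = h1 ∘ p.
  by apply: Kp; rewrite -comp_assoc pi0 comp0r.
by rewrite -(Uh h1) // (Uh h2).
Qed.

Lemma pullback_ext (S T U P W : Obj C) (f : Mor C S U) (g : Mor C T U)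
    (p1 : Mor C P S) (p2 : Mor C P T) (h h' : Mor C W P) :
  is_pullback f g p1 p2 -> p1 ∘ h = p1 ∘ h' -> p2 ∘ h = p2 ∘ h' -> h = h'.
Proof.
move=> [E Up] E1 E2.
have [k [_ Uk]] : exists! k, p1 ∘ k = p1 ∘ h /\ p2 ∘ k = p2 ∘ h.
  by apply: Up; rewrite !comp_assoc E.
by rewrite -(Uk h) // (Uk h').
Qed.

Lemma pushout_ext (S T U Q W : Obj C) (f : Mor C S T) (g : Mor C S U)
    (q1 : Mor C T Q) (q2 : Mor C U Q) (h h' : Mor C Q W) :
  is_pushout f g q1 q2 -> h ∘ q1 = h' ∘ q1 -> h ∘ q2 = h' ∘ q2 -> h = h'.
Proof.
move=> [E Up] E1 E2.
have [k [_ Uk]] : exists! k, k ∘ q1 = h ∘ q1 /\ k ∘ q2 = h ∘ q2.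
  by apply: Up; rewrite -!comp_assoc E.
by rewrite -(Uk h) // (Uk h').
Qed.

Section Biproduct.
Variables X Y : Obj C.
Local Notation inl := (bp_inl X Y).
Local Notation inr := (bp_inr X Y).
Local Notation pl := (bp_pl X Y).
Local Notation pr := (bp_pr X Y).

Definition bp_pair (W : Obj C) (g : Mor C W X) (h : Mor C W Y) :
  Mor C W (biprod X Y) := inl ∘ g + inr ∘ h.

Definition bp_copair (W : Obj C) (v : Mor C X W) (w : Mor C Y W) :
  Mor C (biprod X Y) W := v ∘ pl + w ∘ pr.

(* Composing [bp_sum] with [pl] gives [pl ∘ inr ∘ pr = 0], and [pr] has the
   section [inr]. *)
Lemma bp_pl_inr : pl ∘ inr = 0.
Proof.
have H : pl ∘ (inl ∘ pl + inr ∘ pr) = pl by rewrite bp_sum comp_id_r.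
rewrite comp_addr !comp_assoc bp_pl_inl comp_id_l in H.
have H2 : pl ∘ inr ∘ pr = 0 by apply: (addrI pl); rewrite H addr0.
by rewrite -[LHS]comp_id_r -(bp_pr_inr X Y) comp_assoc H2 comp0l.
Qed.

Lemma bp_pr_inl : pr ∘ inl = 0.
Proof.
have H : pr ∘ (inl ∘ pl + inr ∘ pr) = pr by rewrite bp_sum comp_id_r.
rewrite comp_addr !comp_assoc bp_pr_inr comp_id_l in H.
have H2 : pr ∘ inl ∘ pl = 0 by apply: (addrI pr); rewrite addrC H addr0.
by rewrite -[LHS]comp_id_r -(bp_pl_inl X Y) comp_assoc H2 comp0l.
Qed.

Lemma bp_pl_pair (W : Obj C) (g : Mor C W X) (h : Mor C W Y) :
  pl ∘ bp_pair g h = g.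
Proof.
by rewrite comp_addr !comp_assoc bp_pl_inl bp_pl_inr comp_id_l comp0l addr0.
Qed.

Lemma bp_pr_pair (W : Obj C) (g : Mor C W X) (h : Mor C W Y) :
  pr ∘ bp_pair g h = h.
Proof.
by rewrite comp_addr !comp_assoc bp_pr_inl bp_pr_inr comp_id_l comp0l add0r.
Qed.

Lemma bp_pair_comp (V W : Obj C) (g : Mor C W X) (h : Mor C W Y)
    (k : Mor C V W) :
  bp_pair g h ∘ k = bp_pair (g ∘ k) (h ∘ k).
Proof. by rewrite comp_addl -!comp_assoc. Qed.

Lemma bp_copair_inl (W : Obj C) (v : Mor C X W) (w : Mor C Y W) :
  bp_copair v w ∘ inl = v.
Proof.
by rewrite comp_addl -!comp_assoc bp_pl_inl bp_pr_inl comp_id_r comp0r addr0.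
Qed.

Lemma bp_copair_inr (W : Obj C) (v : Mor C X W) (w : Mor C Y W) :
  bp_copair v w ∘ inr = w.
Proof.
by rewrite comp_addl -!comp_assoc bp_pl_inr bp_pr_inr comp_id_r comp0r add0r.
Qed.

Lemma bp_copair_pair (V W : Obj C) (g : Mor C V X) (h : Mor C V Y)
    (v : Mor C X W) (w : Mor C Y W) :
  bp_copair v w ∘ bp_pair g h = v ∘ g + w ∘ h.
Proof.
by rewrite comp_addr !comp_assoc bp_copair_inl bp_copair_inr.
Qed.

Lemma bp_copair_eta (W : Obj C) (k : Mor C (biprod X Y) W) :
  k = bp_copair (k ∘ inl) (k ∘ inr).
Proof. by rewrite /bp_copair -!comp_assoc -comp_addr bp_sum comp_id_r. Qed.

End Biproduct.

Lemma pushout_cokernel_biprod (S P Q A0 : Obj C) (s : Mor C S P) (p : Mor C P Q)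
    (d : Mor C S A0) (m : Mor C P A0) :
  is_cokernel s p -> m ∘ s = d ->
  is_pushout s d (bp_pair m p) (bp_inl A0 Q).
Proof.
move=> [ps0 Kp] ms.
split; first by rewrite comp_addl -!comp_assoc ms ps0 comp0r addr0.
move=> W u v E.
have [w [Ew _]] : exists! w, w ∘ p = u - v ∘ m.
  by apply: Kp; rewrite compBl -comp_assoc ms E subrr.
exists (bp_copair v w); split.
  by rewrite bp_copair_pair Ew addrC subrK bp_copair_inl.
move=> h [Hu Hv].
have Hw : h ∘ bp_inr A0 Q = w.
  apply: (cokernel_epic (conj ps0 Kp)).
  by rewrite Ew -Hu /bp_pair comp_addr !comp_assoc Hv addrAC subrr add0r.
by rewrite (bp_copair_eta h) Hv Hw.
Qed.

Lemma pullback_kernel_biprod (K P Q A0 : Obj C) (n : Mor C K P) (m : Mor C P A0)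
    (p : Mor C P Q) :
  is_kernel n m -> is_pullback (bp_pair m p) (bp_inr A0 Q) n (p ∘ n).
Proof.
move=> Kn; have [mn0 Un] := Kn.
split; first by rewrite bp_pair_comp mn0 /bp_pair comp0r add0r.
move=> W α β E.
have mα : m ∘ α = 0.
  by rewrite -(bp_pl_pair (m ∘ α) (p ∘ α)) -bp_pair_comp E comp_assoc bp_pl_inr comp0l.
have pα : p ∘ α = β.
  by rewrite -(bp_pr_pair (m ∘ α) (p ∘ α)) -bp_pair_comp E comp_assoc bp_pr_inr comp_id_l.
have [h [nh _]] := Un W α mα.
exists h; split; first by rewrite -comp_assoc nh.
by move=> h' [nh' _]; apply: (kernel_monic Kn); rewrite nh nh'.
Qed.

Lemma pullback_kernel (X Y Z P Z' : Obj C) (x : Mor C X Y) (y : Mor C Y Z)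
    (u : Mor C Z' Z) (t : Mor C P Y) (p : Mor C P Z') (s : Mor C X P) :
  is_kernel x y -> is_pullback y u t p -> t ∘ s = x -> p ∘ s = 0 ->
  is_kernel s p.
Proof.
move=> Kx PB ts ps; split=> // W g pg.
have [h [xh _]] : exists! h, x ∘ h = t ∘ g.
  by apply: Kx.2; rewrite comp_assoc PB.1 -comp_assoc pg comp0r.
exists h; split.
  by apply: (pullback_ext PB); rewrite comp_assoc ?ts ?xh // ps comp0l pg.
by move=> h' sh'; apply: (kernel_monic Kx); rewrite xh -sh' comp_assoc ts.
Qed.

Lemma pullback_kernel_lift (Y Z B P Z' A0 Y' : Obj C) (y : Mor C Y Z)
    (f : Mor C Y B) (a : Mor C A0 B) (u2 : Mor C Y' Y) (u3 : Mor C Z' Z)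
    (t : Mor C P Y) (p : Mor C P Z') (m : Mor C P A0) (n : Mor C Y' P) :
  is_kernel u2 f -> is_pullback y u3 t p -> monic u3 -> monic a ->
  a ∘ m = f ∘ t -> t ∘ n = u2 -> is_kernel n m.
Proof.
move=> Ku2 PB u3m am Em tn.
have [fu2 Uu2] := Ku2.
split.
  by apply: am; rewrite comp_assoc Em -comp_assoc tn fu2 comp0r.
move=> W α mα.
have [h [u2h _]] : exists! h, u2 ∘ h = t ∘ α.
  by apply: Uu2; rewrite comp_assoc -Em -comp_assoc mα comp0r.
exists h; split.
  apply: (pullback_ext PB); first by rewrite comp_assoc tn.
  apply: u3m; rewrite !comp_assoc -PB.1 -(comp_assoc y t n) tn.
  by rewrite -(comp_assoc y t α) -u2h comp_assoc.
by move=> h' nh'; apply: (kernel_monic Ku2); rewrite u2h -nh' comp_assoc tn.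
Qed.

Lemma kernel_square_pullback (X Y B A0 X' Y' : Obj C) (x : Mor C X Y)
    (f : Mor C Y B) (a : Mor C A0 B) (d1 : Mor C X A0) (u1 : Mor C X' X)
    (u2 : Mor C Y' Y) (x' : Mor C X' Y') :
  is_kernel u1 d1 -> monic u2 -> monic a -> f ∘ u2 = 0 ->
  f ∘ x = a ∘ d1 -> x ∘ u1 = u2 ∘ x' -> is_pullback x u2 u1 x'.
Proof.
move=> Ku1 u2m am fu2 Efx Ex'; split=> // W w1 w2 E.
have [h [u1h _]] : exists! h, u1 ∘ h = w1.
  apply: Ku1.2; apply: am.
  by rewrite comp_assoc -Efx -comp_assoc E comp_assoc fu2 comp0l comp0r.
exists h; split.
  by split=> //; apply: u2m; rewrite comp_assoc -Ex' -comp_assoc u1h E.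
by move=> h' [u1h' _]; apply: (kernel_monic Ku1); rewrite u1h u1h'.
Qed.

Lemma kernel_of_induced (X Y Z X' Y' Z' : Obj C) (x : Mor C X Y) (y : Mor C Y Z)
    (u1 : Mor C X' X) (u2 : Mor C Y' Y) (u3 : Mor C Z' Z)
    (x' : Mor C X' Y') (y' : Mor C Y' Z') :
  is_kernel x y -> is_pullback x u2 u1 x' -> monic u3 ->
  u3 ∘ y' = y ∘ u2 -> is_kernel x' y'.
Proof.
move=> [yx0 Kx] PB u3m Ey'; split.
  apply: u3m; rewrite comp_assoc Ey' -comp_assoc -PB.1.
  by rewrite comp_assoc yx0 !comp0l comp0r.
move=> W g yg.
have [k [xk _]] : exists! k, x ∘ k = u2 ∘ g.
  by apply: Kx; rewrite comp_assoc -Ey' -comp_assoc yg comp0r.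
have [h [[u1h x'h] _]] := PB.2 W k g xk.
exists h; split=> // h' x'h'.
apply: (pullback_ext PB); last by rewrite x'h x'h'.
apply: (kernel_monic (conj yx0 Kx)).
by rewrite !comp_assoc !PB.1 -!comp_assoc x'h x'h'.
Qed.

Lemma cokernel_square_pushout (X Y Z A0 B C0 : Obj C) (x : Mor C X Y)
    (y : Mor C Y Z) (a : Mor C A0 B) (b : Mor C B C0) (f : Mor C Y B)
    (d1 : Mor C X A0) (d3 : Mor C Z C0) :
  is_cokernel x y -> is_cokernel a b -> epic d1 -> epic y ->
  f ∘ x = a ∘ d1 -> d3 ∘ y = b ∘ f -> is_pushout y f d3 b.
Proof.
move=> [yx0 _] Cb d1e ye Efx Ed3; split=> // W u v E.
have va : v ∘ a = 0.
  apply: d1e; rewrite -comp_assoc -Efx comp_assoc -E -comp_assoc yx0.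
  by rewrite comp0r comp0l.
have [h [hb _]] := Cb.2 W v va.
exists h; split.
  by split=> //; apply: ye; rewrite -comp_assoc Ed3 comp_assoc hb E.
by move=> h' [_ h'b]; apply: (cokernel_epic Cb); rewrite hb h'b.
Qed.

End AdditiveCategory.

Section ConflationCategory.
Variable C : ConflCat.

Lemma deflation_epic (Y Z : Obj C) (p : Mor C Y Z) : deflation p -> epic p.
Proof. by move=> [X [i /confl_kc [_ Cp]]]; apply: cokernel_epic Cp. Qed.

Lemma deflation_iso_comp (Y Z Z' : Obj C) (c : Mor C Z Z') (p : Mor C Y Z) :
  is_iso c -> deflation p -> deflation (c ∘ p).
Proof.
move=> Ic [K [k Ck]]; exists K, k.
apply: (confl_iso (a := idm K) (b := idm Y) (c := c) _ _ _ _ _ Ck);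
  rewrite ?comp_id_l ?comp_id_r //; exact: iso_id.
Qed.

Lemma deflation_comp_iso (Y' Y Z : Obj C) (p : Mor C Y Z) (φ : Mor C Y' Y) :
  is_iso φ -> deflation p -> deflation (p ∘ φ).
Proof.
move=> [ψ [ψφ φψ]] [K [k Ck]]; exists K, (ψ ∘ k).
apply: (confl_iso (a := idm K) (b := ψ) (c := idm Z) _ _ _ _ _ Ck);
  rewrite ?comp_id_l ?comp_id_r -?comp_assoc ?φψ ?comp_id_r //; try exact: iso_id.
by exists φ.
Qed.

Lemma confl_kernel (K I Y Z : Obj C) (k : Mor C K Y) (i : Mor C I Y)
    (p : Mor C Y Z) :
  Confl k p -> is_kernel i p -> Confl i p.
Proof.
move=> Ck Ki; have [Kk _] := confl_kc Ck.
have [σ [iσ _]] := Ki.2 K k Kk.1.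
have [τ [kτ _]] := Kk.2 I i Ki.1.
apply: (confl_iso (a := σ) (b := idm Y) (c := idm Z) _ _ _ _ _ Ck);
  rewrite ?comp_id_l ?comp_id_r //; try exact: iso_id.
exists τ; split.
- by apply: (kernel_monic Kk); rewrite comp_assoc kτ iσ comp_id_r.
- by apply: (kernel_monic Ki); rewrite comp_assoc iσ kτ comp_id_r.
Qed.

Lemma pushout_deflation (S T U Q R : Obj C) (f : Mor C S T) (g : Mor C S U)
    (q1 : Mor C T Q) (q2 : Mor C U Q) (r1 : Mor C T R) (r2 : Mor C U R) :
  is_pushout f g q1 q2 -> is_pushout f g r1 r2 -> deflation q1 -> deflation r1.
Proof.
move=> POq POr Dq1.
have [φ [[φq1 φq2] _]] := POq.2 R r1 r2 POr.1.
have [ψ [[ψr1 ψr2] _]] := POr.2 Q q1 q2 POq.1.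
rewrite -φq1; apply: deflation_iso_comp Dq1; exists ψ; split.
- by apply: (pushout_ext POq); rewrite -comp_assoc ?φq1 ?φq2 ?ψr1 ?ψr2 comp_id_l.
- by apply: (pushout_ext POr); rewrite -comp_assoc ?ψr1 ?ψr2 ?φq1 ?φq2 comp_id_l.
Qed.

Section DeflationExact.
Hypothesis HC : deflation_exact C.

Lemma pullback_deflation (Y Z Z' P : Obj C) (p : Mor C Y Z) (t : Mor C Z' Z)
    (t' : Mor C P Y) (p' : Mor C P Z') :
  deflation p -> is_pullback p t t' p' -> deflation p'.
Proof.
move=> Dp PB.
have [P0 [p0 [t0 [PB0 Dp0]]]] := HC.2.2 _ _ _ p t Dp.
have [φ [[t0φ p0φ] _]] := PB0.2 P t' p' PB.1.
have [ψ [[t'ψ p'ψ] _]] := PB.2 P0 t0 p0 PB0.1.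
rewrite -p0φ; apply: deflation_comp_iso Dp0; exists ψ; split.
- by apply: (pullback_ext PB); rewrite comp_assoc ?t'ψ ?p'ψ ?t0φ ?p0φ comp_id_r.
- by apply: (pullback_ext PB0); rewrite comp_assoc ?t'ψ ?p'ψ ?t0φ ?p0φ comp_id_r.
Qed.

Variable A : Obj C -> Prop.
Hypothesis HA : adm_defl_percolating A.

(* By (A2), [g] is a deflation followed by an inflation [j]; the cokernel of
   [j] vanishes on the epimorphism [g ∘ s], so [j] is an isomorphism. *)
Lemma deflation_of_comp_into_A (W Z A' : Obj C) (g : Mor C Z A')
    (s : Mor C W Z) :
  A A' -> deflation (g ∘ s) -> deflation g.
Proof.
move=> HA' Dgs; have [_ [_ [A2 _]]] := HA.
have [A'' [d [j [_ [Dd [[W' [c Cjc]] Eg]]]]]] := A2 _ _ g HA'; subst g.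
have [[cj0 Kj] _] := confl_kc Cjc.
have c0 : c = 0.
  by apply: (deflation_epic Dgs); rewrite comp0l !comp_assoc cj0 !comp0l.
have [h [jh _]] : exists! h, j ∘ h = idm A' by apply: Kj; rewrite c0 comp0l.
apply: deflation_iso_comp Dd; exists h; split=> //.
by apply: (kernel_monic (conj cj0 Kj)); rewrite comp_assoc jh comp_id_l comp_id_r.
Qed.

Lemma kernel_map_deflation (X Y Z A0 B C0 Y'' Z'' : Obj C) (x : Mor C X Y)
    (y : Mor C Y Z) (f : Mor C Y B) (a : Mor C A0 B) (b : Mor C B C0)
    (d1 : Mor C X A0) (d3 : Mor C Z C0) (u2 : Mor C Y'' Y) (u3 : Mor C Z'' Z)
    (y'' : Mor C Y'' Z'') :
  Confl x y -> deflation d1 -> A A0 -> is_kernel a b ->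
  f ∘ x = a ∘ d1 -> d3 ∘ y = b ∘ f -> is_kernel u2 f -> is_kernel u3 d3 ->
  u3 ∘ y'' = y ∘ u2 -> deflation y''.
Proof.
move=> Cxy Dd1 HA0 Ka Efx Ed3 Ku2 Ku3 Ey''.
have [_ [_ [_ A3]]] := HA.
have [Kx _] := confl_kc Cxy.
have [P [p [t [PB Dp]]]] := HC.2.2 _ _ _ y u3 (ex_intro _ X (ex_intro _ x Cxy)).
have [s [[ts ps] _]] : exists! s, t ∘ s = x /\ p ∘ s = 0.
  by apply: PB.2; rewrite Kx.1 comp0r.
have Cs : Confl s p.
  have [K [k Ck]] := Dp; exact: confl_kernel Ck (pullback_kernel Kx PB ts ps).
have [m [am _]] : exists! m, a ∘ m = f ∘ t.
  apply: Ka.2; rewrite comp_assoc -Ed3 -comp_assoc PB.1 comp_assoc Ku3.1.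
  exact: comp0l.
have ms : m ∘ s = d1.
  by apply: (kernel_monic Ka); rewrite comp_assoc am -comp_assoc ts Efx.
have [n [[tn pn] _]] := PB.2 Y'' u2 y'' (esym Ey'').
have Kn := pullback_kernel_lift Ku2 PB (kernel_monic Ku3) (kernel_monic Ka) am tn.
have [P' [δ [j [POδ [Dδ _]]]]] :=
  A3 _ _ _ s d1 (ex_intro _ Z'' (ex_intro _ p Cs)) Dd1 HA0.
have DM : deflation (bp_pair m p).
  exact: pushout_deflation POδ (pushout_cokernel_biprod (confl_kc Cs).2 ms) Dδ.
by rewrite -pn; apply: pullback_deflation DM (pullback_kernel_biprod p Kn).
Qed.

End DeflationExact.
End ConflationCategory.

Theorem mainTheorem7 (C : ConflCat) (A : Obj C -> Prop)
  (HC : deflation_exact C) (HA : adm_defl_percolating A)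
  (X Y Z B : Obj C) (x : Mor C X Y) (y : Mor C Y Z) (f : Mor C Y B)
  (Hxy : Confl x y) (Hf : deflation f) (HB : A B) :
  exists (X'' Y'' Z'' A0 C0 : Obj C)
    (x'' : Mor C X'' Y'') (y'' : Mor C Y'' Z'')
    (a : Mor C A0 B) (b : Mor C B C0)
    (u1 : Mor C X'' X) (u2 : Mor C Y'' Y) (u3 : Mor C Z'' Z)
    (d1 : Mor C X A0) (d3 : Mor C Z C0),
    (* rows are conflations *)
    [/\ Confl x'' y'', Confl a b &
    (* columns are conflations *)
    [/\ Confl u1 d1, Confl u2 f & Confl u3 d3]] /\
    (* commutativity of the four squares *)
    [/\ mcomp x u1 = mcomp u2 x'', mcomp y u2 = mcomp u3 y'',
        mcomp f x = mcomp a d1 & mcomp d3 y = mcomp b f] /\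
    (* upper vertical maps are A^{-1}-inflations *)
    [/\ Ainv_inflation A u1, Ainv_inflation A u2 & Ainv_inflation A u3] /\
    (* bottom row lies in A *)
    [/\ A A0, A B & A C0] /\
    (* upper left square is a pullback, lower right square is a pushout *)
    is_pullback x u2 u1 x'' /\ is_pushout y f d3 b.
Proof.
have [_ [R1 _]] := HC; have [_ [A1 [A2 _]]] := HA.
have [A0 [d1 [a [HA0 [Dd1 [[C0 [b Cab]] Efx]]]]]] := A2 _ _ (f ∘ x) HB.
have HC0 : A C0 := ((A1 _ _ _ _ _ Cab).1 HB).2.
have [[Ka Cb] [Kx Cy]] := (confl_kc Cab, confl_kc Hxy).
have Dy : deflation y by exists X, x.
have [d3 [Ed3 _]] : exists! d3, d3 ∘ y = b ∘ f.
  by apply: Cy.2; rewrite -comp_assoc Efx comp_assoc Ka.1 comp0l.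
have Dd3 : deflation d3.
  apply: (deflation_of_comp_into_A HA (s := y) HC0).
  by rewrite Ed3; apply: R1 => //; exists A0, a.
have [X'' [u1 Cu1]] := Dd1; have [Ku1 _] := confl_kc Cu1.
have [Y'' [u2 Cu2]] := Hf; have [Ku2 _] := confl_kc Cu2.
have [Z'' [u3 Cu3]] := Dd3; have [Ku3 _] := confl_kc Cu3.
have [x'' [Ex'' _]] : exists! x'', u2 ∘ x'' = x ∘ u1.
  by apply: Ku2.2; rewrite comp_assoc Efx -comp_assoc Ku1.1 comp0r.
have [y'' [Ey'' _]] : exists! y'', u3 ∘ y'' = y ∘ u2.
  by apply: Ku3.2; rewrite comp_assoc Ed3 -comp_assoc Ku2.1 comp0r.
have PB : is_pullback x u2 u1 x''.
  apply: (kernel_square_pullback Ku1 (kernel_monic Ku2) (kernel_monic Ka)).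
  - exact: Ku2.1.
  - exact: Efx.
  - by rewrite Ex''.
have Cxy'' : Confl x'' y''.
  have [K [k Ck]] :=
    kernel_map_deflation HC HA Hxy Dd1 HA0 Ka Efx Ed3 Ku2 Ku3 Ey''.
  exact: confl_kernel Ck (kernel_of_induced Kx PB (kernel_monic Ku3) Ey'').
exists X'', Y'', Z'', A0, C0, x'', y'', a, b, u1, u2, u3, d1, d3.
split; first by split.
split; first by split.
split; first by split; [exists A0, d1 | exists B, f | exists C0, d3].
split=> //; split=> //.
apply: (cokernel_square_pushout Cy Cb) Efx Ed3.
  exact: deflation_epic Dd1.
exact: deflation_epic Dy.
Qed.
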